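(* Let $\mu,\delta>0$. Then (a) $xy\le x\exp\big(x^\delta/\mu^\delta\big)+\mu\,y(\ln(1+y))^{1/\delta}$ for all $x,y\ge0$; (b) $xy\le x\exp\big((\ln(1+x))^\delta/\mu^\delta\big)+y\exp\big(\mu(\ln(1+y))^{1/\delta}\big)$ for all $x,y\ge0$. Furthermore, for each $q>1$ and $\varepsilon>0$ there is a constant $C_{q,\varepsilon,\mu,\delta}>0$ depending only on $(q,\varepsilon,\mu,\delta)$ such that (c) $xy\le\varepsilon\exp\big(qx^\delta/\mu^\delta\big)+\mu\,y(\ln(1+y))^{1/\delta}+C_{q,\varepsilon,\mu,\delta}$ for all $x,y\ge0$, and (d) in the case $\delta>1$, $xy\le\varepsilon\exp\big(q(\ln(1+x))^\delta/\mu^\delta\big)+y\exp\big(\mu(\ln(1+y))^{1/\delta}\big)+C_{q,\varepsilon,\mu,\delta}$ for all $x,y\ge0$. In particular, (e) $xy\le\mu\exp(x/\mu)+\mu\,y\ln(1+y)$ for all $x,y\ge0$; (f) for each $q>1$ there is a constant $\bar C_{\mu,q}>0$ depending only on $(\mu,q)$ such that $y e^{x}\le\bar C_{\mu,q}\exp\big(qx^2/\mu^2\big)+y\exp\big(\mu\sqrt{\ln(1+y)}\big)$ for all $x,y\ge0$. In addition, (g) for $\delta>1$, $xy\le\mu x^\delta+\mu^{-\frac{1}{\delta-1}}y^{\delta^*}$ for all $x,y\ge0$, where $\delta^*:=\delta/(\delta-1)$. *)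

(* R : realType, expR, ln, powR (a `^ b, with 0 `^ b = 0 for b <> 0). *)
From HB Require Import structures.
From mathcomp Require Import all_boot all_order all_algebra.
From mathcomp Require Import all_classical all_reals all_analysis.

From HB Require Import structures.
From mathcomp Require Import all_boot all_order all_algebra.
From mathcomp Require Import all_classical all_reals all_analysis.
From mathcomp Require Import ring lra.
Import Order.TTheory GRing.Theory Num.Theory.
Local Open Scope ring_scope.

(* Parts (a), (b), (f) and (g) are threshold arguments: for nonnegative
   x, y, e, g with (e < y -> x <= g) one has xy <= xe + yg, because either
   y <= e or x <= g.  Taking for e the x-dependent weight and for g the
   y-dependent one, the implication amounts to inverting an increasing
   function.  Part (e) is the Fenchel-Young inequality
   xy <= e^x + y ln y - y for the exponential.  For (c) and (d), x is
   eventually below eps times the spare factor exp((q-1) phi(x) / mu^delta),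
   so x exp(phi(x) / mu^delta) is absorbed into eps exp(q phi(x) / mu^delta)
   for large x, and by monotonicity it is bounded by a constant before. *)

Section YoungTypeInequalities.
Variable R : realType.
Implicit Types a b c e eps g k m q r t u x y : R.

Lemma ler_mul_threshold x y e g : 0 <= x -> 0 <= y -> 0 <= e -> 0 <= g ->
  (e < y -> x <= g) -> x * y <= x * e + y * g.
Proof.
move=> x0 y0 e0 g0 xg; have [ye|ey] := leP y e.
  by rewrite ler_wpDr ?mulr_ge0 // ler_wpM2l.
by rewrite ler_wpDl ?mulr_ge0 // mulrC ler_wpM2l // xg.
Qed.

Lemma gt0_ltr_powR_mono r : 0 < r ->
  {in Num.nneg &, {mono (@powR R) ^~ r : a b / a < b}}.
Proof. by move=> r0; apply/leW_mono_in/le_mono_in/gt0_ltr_powR. Qed.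

Lemma powRVK a r : 0 <= a -> r != 0 -> (a `^ r^-1) `^ r = a.
Proof. by move=> a0 r0; rewrite -powRrM mulVf // powRr1. Qed.

Lemma ltr_powRV a b r : 0 <= a -> 0 <= b -> 0 < r ->
  (a < b `^ r^-1) = (a `^ r < b).
Proof.
move=> a0 b0 r0.
by rewrite -(gt0_ltr_powR_mono _ r0) ?nnegrE ?powR_ge0 // powRVK // gt_eqF.
Qed.

Lemma powR_div a b r : 0 <= a -> 0 <= b -> (a / b) `^ r = a `^ r / b `^ r.
Proof.
move=> a0 b0; rewrite powRM ?invr_ge0 // -powR_inv1 // powRAC powR_inv1 //.
exact: powR_ge0.
Qed.

Lemma lnD1_ge0 y : 0 <= y -> 0 <= ln (1 + y).
Proof. by move=> y0; rewrite ln_ge0 // lerDl. Qed.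

Lemma ln_lt_lnD1 y : 0 < y -> ln y < ln (1 + y).
Proof. by move=> y0; rewrite ltr_ln ?posrE ?ltrDr // addr_gt0. Qed.

Lemma lt_mul_lnD1_root {m r u y} : 0 < m -> 0 < r -> 0 <= u ->
  expR (u `^ r / m `^ r) < y -> u < m * ln (1 + y) `^ r^-1.
Proof.
move=> m0 r0 u0 ey; have y0 : 0 < y := lt_trans (expR_gt0 _) ey.
have m0' := ltW m0.
rewrite mulrC -ltr_pdivrMr // ltr_powRV ?divr_ge0 ?lnD1_ge0 ?(ltW y0) //.
rewrite powR_div //; apply: lt_trans (ln_lt_lnD1 _ y0).
by rewrite -ltr_expR lnK.
Qed.

Lemma young_expR_powR m r x y : 0 < m -> 0 < r -> 0 <= x -> 0 <= y ->
  x * y <= x * expR (x `^ r / m `^ r) + m * y * ln (1 + y) `^ r^-1.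
Proof.
move=> m0 r0 x0 y0; rewrite (mulrC m) -mulrA.
apply: ler_mul_threshold; rewrite ?mulr_ge0 ?expR_ge0 ?powR_ge0 ?(ltW m0) //.
by move/(lt_mul_lnD1_root m0 r0 x0)/ltW.
Qed.

Lemma young_expR_lnD1 m r x y : 0 < m -> 0 < r -> 0 <= x -> 0 <= y ->
  x * y <= x * expR (ln (1 + x) `^ r / m `^ r)
           + y * expR (m * ln (1 + y) `^ r^-1).
Proof.
move=> m0 r0 x0 y0; apply: ler_mul_threshold; rewrite ?expR_ge0 //.
move/(lt_mul_lnD1_root m0 r0 (lnD1_ge0 x x0))/ltW; rewrite -ler_expR lnK ?posrE.
  by apply: le_trans; rewrite lerDr.
by rewrite ltr_pwDl.
Qed.

Lemma young_powR m r x y : 0 < m -> 1 < r -> 0 <= x -> 0 <= y ->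
  x * y <= m * x `^ r + m `^ (- (r - 1)^-1) * y `^ (r / (r - 1)).
Proof.
move=> m0 r1 x0 y0; have r0 : 0 < r by exact: lt_trans r1.
have s0 : 0 < r - 1 by rewrite subr_gt0.
have -> : m * x `^ r = x * (m * x `^ (r - 1)) by rewrite mulrCA mulr_powRB1.
have -> : m `^ (- (r - 1)^-1) * y `^ (r / (r - 1)) = y * (y / m) `^ (r - 1)^-1.
  have yy : y * y `^ (r - 1)^-1 = y `^ (r / (r - 1)).
    rewrite -[RHS]mulr_powRB1 ?divr_gt0 //; congr (y * y `^ _).
    by field; rewrite gt_eqF.
  by rewrite powR_div ?(ltW m0) // powRN mulrA yy mulrC.
apply: ler_mul_threshold; rewrite ?mulr_ge0 ?powR_ge0 ?(ltW m0) //.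
move=> lt_y; apply: ltW.
by rewrite ltr_powRV ?divr_ge0 ?(ltW m0) // ltr_pdivlMr // mulrC.
Qed.

Lemma conjugate_expR x y : 0 < y -> x * y <= expR x + y * ln y - y.
Proof.
move=> y0; have : y * (1 + (x - ln y)) <= expR x.
  rewrite -[in expR x](subrKC (ln y) x) expRD lnK //.
  by rewrite ler_wpM2l ?expR_ge1Dx ?ltW.
lra.
Qed.

Lemma young_expR_ln m x y : 0 < m -> 0 <= x -> 0 <= y ->
  x * y <= m * expR (x / m) + m * y * ln (1 + y).
Proof.
move=> m0 x0; rewrite le_eqVlt => /predU1P[<-|y0].
  by rewrite !mulr0 mul0r addr0 mulr_ge0 ?expR_ge0 ?ltW.
have -> : x * y = m * (x / m * y) by field; rewrite gt_eqF.
apply: le_trans (ler_wpM2l (ltW m0) (conjugate_expR (x / m) y y0)) _.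
rewrite -mulrA -mulrDr ler_wpM2l ?ltW //.
have := ler_wpM2l (ltW y0) (ltW (ln_lt_lnD1 _ y0)); lra.
Qed.

Lemma ler_sqr_div_add k x : 0 < k -> x <= x ^+ 2 / k + k / 4.
Proof.
move=> k0; rewrite -subr_ge0.
have -> : x ^+ 2 / k + k / 4 - x = (x - k / 2) ^+ 2 / k by field; rewrite gt_eqF.
by rewrite divr_ge0 ?sqr_ge0 ?ltW.
Qed.

Lemma young_expR_sqrt m q : 0 < m -> 1 < q ->
  exists C, 0 < C /\ forall x y, 0 <= x -> 0 <= y ->
    y * expR x <= C * expR (q * x ^+ 2 / m ^+ 2)
                  + y * expR (m * Num.sqrt (ln (1 + y))).
Proof.
move=> m0 q1; have q0 : q - 1 != 0 by rewrite subr_eq0 gt_eqF.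
exists (expR (m ^+ 2 / (4 * (q - 1)))).
split=> [|x y x0 y0]; first exact: expR_gt0.
have thr : expR x * y <= expR x * expR (x ^+ 2 / m ^+ 2)
                         + y * expR (m * Num.sqrt (ln (1 + y))).
  apply: ler_mul_threshold; rewrite ?expR_ge0 // => ey.
  have lt_root := @lt_mul_lnD1_root m 2 x y m0 (ltr0Sn _ 1) x0.
  rewrite !powR_mulrn ?(ltW m0) // powR12_sqrt ?lnD1_ge0 // in lt_root.
  by rewrite ler_expR ltW // lt_root.
rewrite mulrC (le_trans thr) // lerD2r -!expRD ler_expR.
have k0 : 0 < m ^+ 2 / (q - 1) by rewrite divr_gt0 ?exprn_gt0 ?subr_gt0.
have := ler_sqr_div_add _ x k0.
have -> : x ^+ 2 / (m ^+ 2 / (q - 1)) + m ^+ 2 / (q - 1) / 4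
          = m ^+ 2 / (4 * (q - 1)) + q * x ^+ 2 / m ^+ 2 - x ^+ 2 / m ^+ 2.
  by field; rewrite q0 gt_eqF.
lra.
Qed.

Lemma sqr_div2_le_expR t : 0 <= t -> t ^+ 2 / 2 <= expR t.
Proof.
move=> t0; apply: le_trans (expR_ge1Dxn 1 t0).
by rewrite lerDr ler01.
Qed.

Lemma powR_dominates_linear a r c : 0 < a -> 1 < r ->
  exists L0, 0 <= L0 /\ forall L, L0 <= L -> L + c <= a * L `^ r.
Proof.
move=> a0 r1; have s0 : 0 < r - 1 by rewrite subr_gt0.
set T := (2 / a) `^ (r - 1)^-1.
have T0 : 0 <= T := powR_ge0 _ _.
have c_le := ler_norm c; have c_abs := normr_ge0 c.
exists (1 + `|c| + T); split=> [|L L_ge]; first by rewrite !addr_ge0.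
have L1 : 1 <= L by lra.
have LsT : 2 / a <= L `^ (r - 1).
  rewrite -(powRVK (2 / a) (r - 1)) ?divr_ge0 ?(ltW a0) ?gt_eqF //.
  apply: ge0_ler_powR; rewrite ?nnegrE ?(ltW s0) //; [lra | rewrite -/T; lra].
have aLs : 2 <= a * L `^ (r - 1) by rewrite mulrC -ler_pdivrMr.
rewrite -(mulr_powRB1 (x := L)) ?(lt_trans ltr01) //; last lra.
nra.
Qed.

(* [x `^ r = expR (r * ln x) >= (r * ln x) ^+ 2 / 2], a quadratic in [ln x]. *)
Lemma le_mul_expR_powR a r eps : 0 < a -> 0 < r -> 0 < eps ->
  exists X0, 0 <= X0 /\ forall x, X0 <= x -> x <= eps * expR (a * x `^ r).
Proof.
move=> a0 r0 eps0; have b0 : 0 < a * r ^+ 2 / 2 by rewrite !divr_gt0 ?mulr_gt0.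
have [L0 [L00 HL]] := powR_dominates_linear _ _ (- ln eps) b0 (ltr1n _ 2).
exists (expR L0); split=> [|x x_ge]; first exact: expR_ge0.
have x0 : 0 < x := lt_le_trans (expR_gt0 _) x_ge.
have lnx_ge : L0 <= ln x by rewrite -ler_expR lnK.
have := HL _ lnx_ge; rewrite powR_mulrn ?(le_trans L00) // => lin_le.
have := sqr_div2_le_expR _ (mulr_ge0 (ltW r0) (le_trans L00 lnx_ge)).
rewrite exprMn => /(ler_wpM2l (ltW a0)) sqr_le.
rewrite -ler_ln ?posrE ?mulr_gt0 ?expR_gt0 // lnM ?posrE ?expR_gt0 // expRK.
rewrite /powR gt_eqF //; lra.
Qed.

Lemma le_mul_expR_lnD1_powR a r eps : 0 < a -> 1 < r -> 0 < eps ->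
  exists X0, 0 <= X0 /\ forall x, X0 <= x ->
    x <= eps * expR (a * ln (1 + x) `^ r).
Proof.
move=> a0 r1 eps0.
have [L0 [L00 HL]] := powR_dominates_linear _ _ (- ln eps) a0 r1.
exists (expR L0); split=> [|x x_ge]; first exact: expR_ge0.
have x0 : 0 < x := lt_le_trans (expR_gt0 _) x_ge.
have x1 : 0 < 1 + x by rewrite addr_gt0.
have lnx_ge : L0 <= ln (1 + x) by rewrite -ler_expR lnK // (le_trans x_ge) ?lerDr.
apply: le_trans (_ : x <= 1 + x) _; first by rewrite lerDr.
rewrite -ler_ln ?posrE ?mulr_gt0 ?expR_gt0 // lnM ?posrE ?expR_gt0 // expRK.
have := HL _ lnx_ge; lra.
Qed.

Lemma mul_expR_le_add_const (phi : R -> R) m q eps : 0 < m -> 0 < eps ->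
  {in Num.nneg &, {homo phi : u v / u <= v}} ->
  (exists X0, 0 <= X0 /\ forall x, X0 <= x ->
     x <= eps * expR ((q - 1) / m * phi x)) ->
  exists C, 0 < C /\ forall x, 0 <= x ->
    x * expR (phi x / m) <= eps * expR (q * phi x / m) + C.
Proof.
move=> m0 eps0 phi_homo [X0 [X00 HX]].
have C0 : 0 <= X0 * expR (phi X0 / m) by rewrite mulr_ge0 ?expR_ge0.
exists (1 + X0 * expR (phi X0 / m)); split=> [|x x0]; first lra.
have F0 : 0 <= eps * expR (q * phi x / m) by rewrite mulr_ge0 ?expR_ge0 ?ltW.
have [X0_le|x_lt] := leP X0 x.
  have : x * expR (phi x / m) <= eps * expR (q * phi x / m).
    apply: le_trans (ler_wpM2r (expR_ge0 _) (HX x X0_le)) _.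
    rewrite -[leLHS]mulrA -expRD.
    have -> : (q - 1) / m * phi x + phi x / m = q * phi x / m.
      by field; rewrite gt_eqF.
    exact: lexx.
  lra.
have : x * expR (phi x / m) <= X0 * expR (phi X0 / m).
  rewrite ler_pM ?expR_ge0 ?(ltW x_lt) // ler_expR.
  rewrite ler_wpM2r ?invr_ge0 ?(ltW m0) //.
  by rewrite phi_homo ?nnegrE ?(ltW x_lt).
lra.
Qed.

Lemma young_expR_powR_add_const m r q eps : 0 < m -> 0 < r -> 1 < q -> 0 < eps ->
  exists C, 0 < C /\ forall x y, 0 <= x -> 0 <= y ->
    x * y <= eps * expR (q * x `^ r / m `^ r) + m * y * ln (1 + y) `^ r^-1 + C.
Proof.
move=> m0 r0 q1 eps0; have mr0 : 0 < m `^ r by rewrite powR_gt0.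
have a0 : 0 < (q - 1) / m `^ r by rewrite divr_gt0 ?subr_gt0.
have [C [C0 HC]] := mul_expR_le_add_const (@powR R ^~ r) _ q _ mr0 eps0
  (ge0_ler_powR (ltW r0)) (le_mul_expR_powR _ _ _ a0 r0 eps0).
exists C; split=> // x y x0 y0.
have := young_expR_powR m r x y m0 r0 x0 y0; have := HC x x0; lra.
Qed.

Lemma young_expR_lnD1_add_const m r q eps : 0 < m -> 1 < r -> 1 < q -> 0 < eps ->
  exists C, 0 < C /\ forall x y, 0 <= x -> 0 <= y ->
    x * y <= eps * expR (q * ln (1 + x) `^ r / m `^ r)
             + y * expR (m * ln (1 + y) `^ r^-1) + C.
Proof.
move=> m0 r1 q1 eps0; have r0 : 0 < r := lt_trans ltr01 r1.
have mr0 : 0 < m `^ r by rewrite powR_gt0.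
have a0 : 0 < (q - 1) / m `^ r by rewrite divr_gt0 ?subr_gt0.
have lnD1_homo :
    {in Num.nneg &, {homo (fun u => ln (1 + u) `^ r) : u v / u <= v}}.
  move=> u v; rewrite !nnegrE => u0 v0 uv.
  rewrite ge0_ler_powR ?nnegrE ?lnD1_ge0 ?(ltW r0) //.
  by rewrite ler_ln ?posrE ?lerD2l // (lt_le_trans ltr01) // lerDl.
have [C [C0 HC]] := mul_expR_le_add_const _ _ q _ mr0 eps0 lnD1_homo
  (le_mul_expR_lnD1_powR _ _ _ a0 r1 eps0).
exists C; split=> // x y x0 y0.
have := young_expR_lnD1 m r x y m0 r0 x0 y0; have := HC x x0; lra.
Qed.

End YoungTypeInequalities.

Theorem proposition4p1 (R : realType) (mu delta : R) (hmu : 0 < mu) (hdelta : 0 < delta) :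
  (* (a) *)
  (forall x y : R, 0 <= x -> 0 <= y ->
     x * y <= x * expR (x `^ delta / mu `^ delta)
              + mu * y * (ln (1 + y)) `^ (delta^-1)) /\
  (* (b) *)
  (forall x y : R, 0 <= x -> 0 <= y ->
     x * y <= x * expR ((ln (1 + x)) `^ delta / mu `^ delta)
              + y * expR (mu * (ln (1 + y)) `^ (delta^-1))) /\
  (* (c) *)
  (forall q eps : R, 1 < q -> 0 < eps ->
     exists C : R, 0 < C /\
       forall x y : R, 0 <= x -> 0 <= y ->
         x * y <= eps * expR (q * x `^ delta / mu `^ delta)
                  + mu * y * (ln (1 + y)) `^ (delta^-1) + C) /\
  (* (d) *)
  (1 < delta -> forall q eps : R, 1 < q -> 0 < eps ->
     exists C : R, 0 < C /\
       forall x y : R, 0 <= x -> 0 <= y ->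
         x * y <= eps * expR (q * (ln (1 + x)) `^ delta / mu `^ delta)
                  + y * expR (mu * (ln (1 + y)) `^ (delta^-1)) + C) /\
  (* (e) *)
  (forall x y : R, 0 <= x -> 0 <= y ->
     x * y <= mu * expR (x / mu) + mu * y * ln (1 + y)) /\
  (* (f) *)
  (forall q : R, 1 < q ->
     exists C : R, 0 < C /\
       forall x y : R, 0 <= x -> 0 <= y ->
         y * expR x <= C * expR (q * x ^+ 2 / mu ^+ 2)
                       + y * expR (mu * Num.sqrt (ln (1 + y)))) /\
  (* (g) *)
  (1 < delta -> forall x y : R, 0 <= x -> 0 <= y ->
     x * y <= mu * x `^ delta
              + mu `^ (- (delta - 1)^-1) * y `^ (delta / (delta - 1))).
Proof.
split=> [x y|]; first exact: young_expR_powR.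
split=> [x y|]; first exact: young_expR_lnD1.
split=> [q eps|]; first exact: young_expR_powR_add_const.
split=> [delta1 q eps|]; first exact: young_expR_lnD1_add_const.
split=> [x y|]; first exact: young_expR_ln.
split=> [q|]; first exact: young_expR_sqrt.
move=> delta1 x y; exact: young_powR.
Qed.
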